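(* Consider the miners' game with $n$ miners $s_1,\dots,s_n$, parameters $R>0$, $N>0$, unit prices $\lambda_1,\dots,\lambda_n>0$, where miner $s_i$ chooses $\mu_i\ge0$ and receives profit $P_i=\frac{\mu_i}{\sum_{j=1}^n\mu_j}RN-\lambda_i\mu_i$ (the fraction being $0$ if $\sum_j\mu_j=0$). Let $\boldsymbol{\mu}^*=(\mu_1^*,\dots,\mu_n^* )$ be a Nash equilibrium of this game. Then for any $i,j$, if $\lambda_i\le\lambda_j$ then $\mu_i^*\ge\mu_j^*$.
   Context: A Nash equilibrium is a profile $\boldsymbol{\mu}^*$ with all $\mu_i^*\ge 0$ such that no miner $s_i$ can strictly increase $P_i$ by unilaterally changing $\mu_i^*$ to another value $\mu_i\ge0$. *)

From mathcomp Require Import all_boot all_order all_algebra.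
Set Implicit Arguments. Unset Strict Implicit. Unset Printing Implicit Defensive.
Import Order.TTheory GRing.Theory Num.Theory.
Local Open Scope ring_scope.

Definition profit {R : realFieldType} {n : nat} (R0 N : R) (lam : 'I_n -> R)
  (mu : 'I_n -> R) (i : 'I_n) : R :=
  let S := \sum_(j < n) mu j in
  (if S == 0 then 0 else mu i / S) * R0 * N - lam i * mu i.

Definition deviate {R : realFieldType} {n : nat} (mu : 'I_n -> R) (i : 'I_n) (x : R)
  : 'I_n -> R := fun j => if j == i then x else mu j.

Definition nash_equilibrium {R : realFieldType} {n : nat} (R0 N : R)
  (lam : 'I_n -> R) (mu : 'I_n -> R) : Prop :=
  (forall i, 0 <= mu i) /\
  (forall i (x : R), 0 <= x ->
     ~ (profit R0 N lam mu i < profit R0 N lam (deviate mu i x) i)).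

From mathcomp Require Import all_boot all_order all_algebra.
From mathcomp Require Import ring lra.
Import Order.TTheory GRing.Theory Num.Theory.
Set Implicit Arguments. Unset Strict Implicit. Unset Printing Implicit Defensive.
Local Open Scope ring_scope.

(* Against the others' total A, miner i's profit is x |-> c x / (x + A) - lam x
   with c = R0 N.  At an equilibrium with total S it is maximal at x = mu i, so
   its one-sided derivatives there give c (S - mu i) <= lam i S^2, with
   equality when mu i > 0.  So if mu j > mu i >= 0 and lam i <= lam j, then
   c (S - mu j) = lam j S^2 >= lam i S^2 >= c (S - mu i), i.e. mu j <= mu i. *)

Lemma ler_of_lerD_small (R : realFieldType) (x y k d : R) :
  0 < k -> 0 < d -> (forall e, 0 < e <= d -> x <= y + k * e) -> x <= y.
Proof.
move=> k_gt0 d_gt0 small; apply/ler_addgt0Pr => e e_gt0.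
set e' := Num.min (e / k) d.
have e'_gt0 : 0 < e' by rewrite lt_min divr_gt0.
apply: le_trans (small e' _) _; first by rewrite e'_gt0 ge_min lexx orbT.
by rewrite lerD2l mulrC -ler_pdivlMr // /e' ge_min lexx.
Qed.

Lemma ler_sum_term (R : numDomainType) n (F : 'I_n -> R) i :
  (forall j, 0 <= F j) -> F i <= \sum_j F j.
Proof. by move=> F_ge0; rewrite (bigD1 i) //= lerDl sumr_ge0. Qed.

Lemma sum_deviate (R : realFieldType) n (mu : 'I_n -> R) i x :
  \sum_j deviate mu i x j = \sum_j mu j - mu i + x.
Proof.
rewrite /deviate (bigD1 i) //= [in RHS](bigD1 i) //= eqxx.
under eq_bigr => j /negbTE -> do [].
by rewrite addrC (addrC (mu i)) addrK.
Qed.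

Section Equilibrium.

Variables (R : realFieldType) (n : nat) (R0 N : R) (lam mu : 'I_n -> R).
Hypothesis mu_nash : nash_equilibrium R0 N lam mu.

Local Notation S := (\sum_j mu j).
Local Notation c := (R0 * N).

(* The numerator vanishes at x = mu i because x S - mu i (x + S - mu i)
   = (x - mu i) (S - mu i). *)
Lemma profit_deviate_gain i x : 0 < S -> 0 < x + (S - mu i) ->
  profit R0 N lam (deviate mu i x) i - profit R0 N lam mu i
  = (x - mu i) * (c * (S - mu i) - lam i * S * (x + (S - mu i)))
    / (S * (x + (S - mu i))).
Proof.
move=> S_gt0 y_gt0; rewrite /profit sum_deviate /deviate eqxx.
rewrite (addrC (S - mu i)) (gt_eqF S_gt0) (gt_eqF y_gt0).
by field; rewrite !gt_eqF.
Qed.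

Lemma nash_deviation_le0 i x : 0 < S -> 0 <= x -> 0 < x + (S - mu i) ->
  (x - mu i) * (c * (S - mu i) - lam i * S * (x + (S - mu i))) <= 0.
Proof.
move=> S_gt0 x_ge0 y_gt0.
have := mu_nash.2 i x x_ge0; move/negP; rewrite -leNgt -subr_le0.
by rewrite profit_deviate_gain // pmulr_lle0 // invr_gt0 mulr_gt0.
Qed.

Lemma nash_marginal_le i : 0 < S -> 0 < lam i -> c * (S - mu i) <= lam i * S * S.
Proof.
move=> S_gt0 lam_gt0; have lamS_gt0 : 0 < lam i * S by rewrite mulr_gt0.
apply: (ler_of_lerD_small lamS_gt0 ltr01) => e /andP[e_gt0 _].
have mu_ge0 := mu_nash.1 i; have muS := ler_sum_term i mu_nash.1.
have := @nash_deviation_le0 i (mu i + e) S_gt0 (ltac:(lra)) (ltac:(lra)).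
by rewrite (addrC (mu i) e) addrK pmulr_rle0 //; nra.
Qed.

Lemma nash_marginal_ge i : 0 < mu i -> 0 < lam i -> lam i * S * S <= c * (S - mu i).
Proof.
move=> mu_gt0 lam_gt0; have muS := ler_sum_term i mu_nash.1.
have S_gt0 : 0 < S by exact: lt_le_trans muS.
have lamS_gt0 : 0 < lam i * S by rewrite mulr_gt0.
have half_gt0 : 0 < mu i / 2 by rewrite divr_gt0.
apply: (ler_of_lerD_small lamS_gt0 half_gt0) => e /andP[e_gt0 e_le].
have := @nash_deviation_le0 i (mu i - e) S_gt0 (ltac:(lra)) (ltac:(lra)).
by rewrite addrAC subrr add0r mulNr oppr_le0 pmulr_rge0 //; nra.
Qed.

End Equilibrium.

Theorem corollary1 (R : realFieldType) (n : nat) (R0 N : R) (lam : 'I_n -> R)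
  (mu : 'I_n -> R) :
  0 < R0 -> 0 < N -> (forall i, 0 < lam i) ->
  nash_equilibrium R0 N lam mu ->
  forall i j : 'I_n, lam i <= lam j -> mu j <= mu i.
Proof.
move=> R0_gt0 N_gt0 lam_gt0 nash i j lam_ij.
have [mu_j_le0 | mu_j_gt0] := leP (mu j) 0; first exact: le_trans (nash.1 i).
set S := \sum_k mu k.
have S_gt0 : 0 < S by exact: lt_le_trans (ler_sum_term j nash.1).
have : R0 * N * (S - mu i) <= R0 * N * (S - mu j).
  apply: le_trans (nash_marginal_le nash S_gt0 (lam_gt0 i)) _.
  apply: le_trans (nash_marginal_ge nash mu_j_gt0 (lam_gt0 j)).
  by rewrite !ler_pM2r.
by rewrite ler_pM2l ?mulr_gt0 // lerD2l lerN2.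
Qed.
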